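(* For every $(x,a)\in H\times\mathcal{A}$, the robust Q-function satisfies \[ Q^{\delta,\mathscr{P}}_{\pi}(x,a)=\inf_{\lambda\ge0}\Big[\lambda\delta+\sum_{y\in\mathcal{X}}\max_{l\in\mathcal{X}}\Big(-\lambda|l-y|+c(x,a,l)+\sum_{a'\in\mathcal{A}}Q^{\delta,\mathscr{P}}_{\pi}(l,a')\pi(a'|l)\Big)P_{x,a}(y)\Big], \] where $c(x,a,l)=1$ if $l\in U$ and $c(x,a,l)=0$ otherwise.
   Context: Consider a Markov decision process with a finite state set $\mathcal{X}$, viewed as a subset of $\mathbb{R}$ (so $|y-z|$ is the distance between states), and a finite action set $\mathcal{A}$. The state set is partitioned into a goal set $E$, a forbidden (unsafe) set $U$, and $H:=\mathcal{X}\setminus(E\cup U)$; $E$ and $U$ are terminal (the process stops there). For each $(x,a)\in H\times\mathcal{A}$ a nominal transition probability $\mathcal{P}_{x,a}=\{P_{x,a}(y)\}_{y\in\mathcal{X}}$ on $\mathcal{X}$ is given, and $\mathscr{P}=\{\mathcal{P}_{x,a}\}_{(x,a)\in H\times\mathcal{A}}$; transition probabilities are time-invariant. The sample space is $\Omega=(\mathcal{X}\times\mathcal{A})^{\infty}$ with coordinate processes $X_t,A_t$. A stationary policy is $\pi:\mathcal{X}\to\mathscr{M}(\mathcal{A})$, written $\pi(a|x)$. For any collection $\tilde{\mathscr{P}}=\{\tilde{\mathcal{P}}_{x,a}\}_{(x,a)\in H\times\mathcal{A}}$ of transition probabilities, $\mathbb{E}^{\tilde{\mathscr{P}}}_{\pi}$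 denotes expectation for the process with $X_{t+1}\sim\tilde{\mathcal{P}}_{X_t,A_t}$ and $A_t\sim\pi(\cdot|X_t)$ (except when $A_0$ is conditioned on). For $S\subseteq\mathcal{X}$, $\tau_S$ is the first hitting time of $S$, and $\tau=\tau_{E\cup U}$. The 1-Wasserstein distance between probability measures $\mu,\nu$ on $\mathcal{X}$ is $W(\mu,\nu)=\min\{\sum_{(y,z)}\Gamma(y,z)|y-z| : \Gamma\in\mathscr{M}(\mathcal{X}\times\mathcal{X}),\ \sum_z\Gamma(y,z)=\mu(y),\ \sum_y\Gamma(y,z)=\nu(z)\}$. For $\delta\ge0$, $\mathcal{D}^{\delta}_{x,a}=\{\tilde{\mathcal{P}}_{x,a}\in\mathscr{M}(\mathcal{X}): W(\tilde{\mathcal{P}}_{x,a},\mathcal{P}_{x,a})\le\delta\}$ and $\mathscr{D}^{\delta}=\prod_{(x,a)\in H\times\mathcal{A}}\mathcal{D}^{\delta}_{x,a}$. The robust Q-function is $Q^{\delta,\mathscr{P}}_{\pi}(x,a)=\sup_{\tilde{\mathscr{P}}\in\mathscr{D}^{\delta}}\mathbb{E}^{\tilde{\mathscr{P}}}_{\pi}\big[\sum_{t=0}^{\tau-1}c_{t+1}\mid X_0=x,A_0=a\big]$, where $c_{t+1}=1$ if $X_{t+1}\in U$ and $0$ otherwise; by the same formula (empty sum, since $\tau=0$), $Q^{\delta,\mathscr{P}}_{\pi}(l,a')=0$ for terminal states $l\in E\cup U$. *)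

From HB Require Import structures.
From mathcomp Require Import all_boot all_order all_algebra.
From mathcomp Require Import all_classical all_reals all_analysis.
Set Implicit Arguments. Unset Strict Implicit. Unset Printing Implicit Defensive.
Import Order.TTheory GRing.Theory Num.Theory.
Local Open Scope classical_set_scope.
Local Open Scope ring_scope.

Definition is_prob (R : realType) (T : finType) (p : T -> R) : Prop :=
  (forall t, 0 <= p t) /\ \sum_(t : T) p t = 1.

Definition coupling (R : realType) (X : finType) (mu nu : X -> R)
  (G : X -> X -> R) : Prop :=
  [/\ forall y z, 0 <= G y z,
      forall y, \sum_(z : X) G y z = mu y
    & forall z, \sum_(y : X) G y z = nu z].

(* 1-Wasserstein distance; states embedded in R via pos *)
Definition wass (R : realType) (X : finType) (pos : X -> R) (mu nu : X -> R)
  : \bar R :=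
  ereal_inf ((fun G : X -> X -> R =>
     (\sum_(y : X) \sum_(z : X) G y z * `|pos y - pos z|)%:E)
     @` [set G | coupling mu nu G]).

Definition Hset (X : finType) (E U : {set X}) : {set X} := ~: (E :|: U).

(* E^{Pt}_pi [ sum_{t=0}^{min(tau,n)-1} c_{t+1} | X0 = x, A0 = a ]
   (n-step truncation of the cumulative cost, by the Markov property) *)
Fixpoint Qfin (R : realType) (X A : finType) (E U : {set X})
  (pi : X -> A -> R) (Pt : X -> A -> X -> R) (n : nat) (x : X) (a : A) : R :=
  match n with
  | 0 => 0
  | n'.+1 =>
      if x \in Hset E U then
        \sum_(y : X) Pt x a y *
          ((y \in U)%:R + \sum_(a' : A) pi y a' * Qfin E U pi Pt n' y a')
      else 0
  end.

(* Q-function under kernel Pt: the expectation of the full cumulative cost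
   = monotone limit (sup) of the truncated expectations *)
Definition Qpol (R : realType) (X A : finType) (E U : {set X})
  (pi : X -> A -> R) (Pt : X -> A -> X -> R) (x : X) (a : A) : \bar R :=
  ereal_sup (range (fun n : nat => (Qfin E U pi Pt n x a)%:E)).

(* the ambiguity set D^delta (kernels only matter on H x A) *)
Definition ambiguity (R : realType) (X A : finType) (pos : X -> R)
  (E U : {set X}) (P : X -> A -> X -> R) (delta : R)
  (Pt : X -> A -> X -> R) : Prop :=
  forall x a, x \in Hset E U ->
    is_prob (Pt x a) /\ (wass pos (Pt x a) (P x a) <= delta%:E)%E.

Definition robustQ (R : realType) (X A : finType) (pos : X -> R)
  (E U : {set X}) (P : X -> A -> X -> R) (pi : X -> A -> R) (delta : R)
  (x : X) (a : A) : \bar R :=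
  ereal_sup ((fun Pt => Qpol E U pi Pt x a) @` [set Pt | ambiguity pos E U P delta Pt]).

Definition dual_obj (R : realType) (X A : finType) (pos : X -> R)
  (E U : {set X}) (P : X -> A -> X -> R) (pi : X -> A -> R) (delta : R)
  (x : X) (a : A) (lam : R) : \bar R :=
  ((lam * delta)%:E +
   \sum_(y : X)
     (\big[Order.max/-oo]_(l : X)
        ((- lam * `|pos l - pos y|)%:E + ((l \in U)%:R)%:E
         + \sum_(a' : A) robustQ pos E U P pi delta l a' * (pi l a')%:E))
     * (P x a y)%:E)%E.

Definition disjointEU (X : finType) (E U : {set X}) : bool := [disjoint E & U]%B.

(* First, the robust value [rvalue], a supremum over
   stationary kernels, satisfies the robust Bellman equation
   V(x,a) = sup_{p in ball} sum_l p(l) (c(l) + sum_a' pi(a'|l) V(l,a')).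
   Value iteration, which may change kernels at every step, bounds it from
   above; conversely a stationary kernel that is nearly optimal for one step
   of discounted value iteration reproduces the discounted iterates up to a
   geometric error, and letting the discount tend to 1 recovers every
   undiscounted iterate.  Second, on a finite space the supremum of a linear
   functional over a Wasserstein ball equals its Lagrangian dual: pushing the
   nominal law through deterministic maps, a single linear constraint means
   a mixture of two maps is optimal, and the multiplier is the largest slope
   (gain - value) / (cost - delta) over infeasible maps. *)

From HB Require Import structures.
From mathcomp Require Import all_boot all_order all_algebra.
From mathcomp Require Import all_classical all_reals all_analysis.
From mathcomp Require Import ring lra.
Import Order.TTheory GRing.Theory Num.Theory.
Local Open Scope classical_set_scope.
Local Open Scope ring_scope.
Set Implicit Arguments. Unset Strict Implicit.

Lemma sumr_indicator (R : pzSemiRingType) (T : finType) (a : T) (G : T -> R) :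
  \sum_(i : T) (a == i)%:R * G i = G a.
Proof.
rewrite (bigD1 a) //= eqxx mul1r big1 ?addr0 // => i /negPf ia.
by rewrite eq_sym ia mul0r.
Qed.

Section MixtureDuality.
Variables (R : realType) (S : finType) (gain cost : S -> R) (delta : R).

(* The value of the mixture of [s] and [t] that saturates the constraint
   [cost <= delta], or [gain s] when [t] is itself feasible. *)
Definition crossing_value (s t : S) : R :=
  if cost t <= delta then gain s
  else (gain s * (cost t - delta) + gain t * (delta - cost s)) / (cost t - cost s).

Lemma crossing_value_mixture s t : cost s <= delta ->
  exists th, [/\ 0 <= th <= 1, th * cost s + (1 - th) * cost t <= delta &
    crossing_value s t = th * gain s + (1 - th) * gain t].
Proof.
move=> hs; rewrite /crossing_value; case: leP => ht.
  by exists 1; rewrite ler01 lexx subrr !mul0r !addr0 !mul1r.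
have den_gt0 : 0 < cost t - cost s by rewrite subr_gt0 (le_lt_trans hs).
have den_neq0 : cost t - cost s != 0 by rewrite gt_eqF.
exists ((cost t - delta) / (cost t - cost s)); split.
- apply/andP; split; first by apply: divr_ge0; lra.
  by rewrite ler_pdivrMr // mul1r; lra.
- by rewrite [X in X <= _](_ : _ = delta) //; field.
- by field.
Qed.

Lemma lagrange_multiplier V :
  (forall s t, cost s <= delta -> crossing_value s t <= V) ->
  exists2 lam, 0 <= lam & forall u, gain u + lam * (delta - cost u) <= V.
Proof.
move=> hV.
pose lam := \big[Num.max/0]_(t | delta < cost t) ((gain t - V) / (cost t - delta)).
exists lam => [|u]; first exact: bigmax_ge_id.
case: (leP (cost u) delta) => hu; last first.
  have hl : (gain u - V) / (cost u - delta) <= lam by exact: le_bigmax_cond.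
  by move: hl; rewrite ler_pdivrMr ?subr_gt0 //; lra.
have gain_le : gain u <= V by have := hV u u hu; rewrite /crossing_value hu.
rewrite -lerBrDl; apply: (big_ind (fun z => z * (delta - cost u) <= V - gain u)).
- by rewrite mul0r subr_ge0.
- by move=> z1 z2 h1 h2; rewrite /Num.max; case: ifP.
move=> t ht; have := hV u t hu; rewrite /crossing_value (leNgt (cost t)) ht /=.
have d1 : 0 < cost t - delta by rewrite subr_gt0.
rewrite ler_pdivrMr ?subr_gt0 ?(le_lt_trans hu) // mulrAC ler_pdivrMr //.
nra.
Qed.

Lemma mixture_duality : (exists s0, cost s0 <= delta) ->
  exists s t th lam, [/\ 0 <= th <= 1, th * cost s + (1 - th) * cost t <= delta,
    0 <= lam & forall u, gain u + lam * (delta - cost u) <= th * gain s + (1 - th) * gain t].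
Proof.
move=> [s0 hs0].
have [[s t] /= hs hmax] := @arg_maxP _ _ _ (s0, s0) (fun st => cost st.1 <= delta)
  (fun st => crossing_value st.1 st.2) hs0.
have [th [th01 hC hval]] := crossing_value_mixture t hs.
have [lam lam0 hlam] := lagrange_multiplier (fun u v hu => hmax (u, v) hu).
by exists s, t, th, lam; split; rewrite -?hval.
Qed.

End MixtureDuality.

Section WassersteinDuality.
Variables (R : realType) (X : finType) (pos : X -> R) (mu : X -> R) (delta : R).
Hypotheses (mu_prob : is_prob mu) (delta_ge0 : 0 <= delta).

Definition wball : set (X -> R) :=
  [set p | is_prob p /\ (wass pos p mu <= delta%:E)%E].

Lemma sum_kernel_push (K : X -> X -> R) (G : X -> R) :
  \sum_(l : X) (\sum_(y : X) mu y * K y l) * G l =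
  \sum_(y : X) mu y * \sum_(l : X) K y l * G l.
Proof.
under eq_bigr => l _ do rewrite mulr_suml.
rewrite exchange_big /=; apply: eq_bigr => y _.
by rewrite mulr_sumr; apply: eq_bigr => l _; rewrite mulrA.
Qed.

Lemma wball_kernel (K : X -> X -> R) :
  (forall y l, 0 <= K y l) -> (forall y, \sum_(l : X) K y l = 1) ->
  \sum_(y : X) mu y * \sum_(l : X) K y l * `|pos l - pos y| <= delta ->
  wball (fun l => \sum_(y : X) mu y * K y l).
Proof.
have [mu0 mu1] := mu_prob => K0 K1 Kcost.
have G0 l y : 0 <= mu y * K y l by rewrite mulr_ge0.
split; first split.
- by move=> l; rewrite sumr_ge0.
- by rewrite exchange_big /=; under eq_bigr do rewrite -mulr_sumr K1 mulr1.
apply: (@le_trans _ _ (\sum_(y : X) mu y * \sum_(l : X) K y l * `|pos l - pos y|)%:E).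
  apply: ereal_inf_lbound; exists (fun l y => mu y * K y l); last first.
    congr (_%:E); rewrite exchange_big /=; apply: eq_bigr => y _.
    by rewrite mulr_sumr; apply: eq_bigr => l _; rewrite mulrA.
  by split=> // y; rewrite -mulr_sumr K1 mulr1.
by rewrite lee_fin.
Qed.

Lemma wball_center : wball mu.
Proof.
have mu_eq : mu = fun l => \sum_(y : X) mu y * (y == l)%:R.
  apply: funext => l; rewrite -[LHS](sumr_indicator l mu).
  by apply: eq_bigr => y _; rewrite mulrC eq_sym.
rewrite [X in wball X]mu_eq; apply: wball_kernel.
- by move=> y l; rewrite ler0n.
- move=> y; rewrite -[RHS](sumr_indicator y (fun=> 1)).
  by apply: eq_bigr => l _; rewrite mulr1.
by rewrite big1 // => y _; rewrite sumr_indicator subrr normr0 mulr0.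
Qed.

Variable F : X -> R.

Definition transport_gain (s : X -> X) : R := \sum_(y : X) mu y * F (s y).
Definition transport_cost (s : X -> X) : R :=
  \sum_(y : X) mu y * `|pos (s y) - pos y|.

Lemma wball_mixture th (s t : X -> X) : 0 <= th <= 1 ->
  th * transport_cost s + (1 - th) * transport_cost t <= delta ->
  exists2 p, wball p &
    \sum_(l : X) p l * F l = th * transport_gain s + (1 - th) * transport_gain t.
Proof.
move=> /andP[th0 th1] hcost.
pose K y l := th * (s y == l)%:R + (1 - th) * (t y == l)%:R.
have K_sum G y : \sum_(l : X) K y l * G l = th * G (s y) + (1 - th) * G (t y).
  under eq_bigr do rewrite mulrDl -!mulrA.
  by rewrite big_split -!mulr_sumr !sumr_indicator.
have mixE G : \sum_(y : X) mu y * \sum_(l : X) K y l * G y l =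
    th * \sum_(y : X) mu y * G y (s y) + (1 - th) * \sum_(y : X) mu y * G y (t y).
  under eq_bigr => y _ do rewrite K_sum.
  by rewrite !mulr_sumr -big_split; apply: eq_bigr => y _ /=; ring.
exists (fun l => \sum_(y : X) mu y * K y l); last by rewrite sum_kernel_push mixE.
apply: wball_kernel; last by rewrite (mixE (fun y l => `|pos l - pos y|)).
- by move=> y l; rewrite addr_ge0 // mulr_ge0 ?ler0n ?subr_ge0.
- by move=> y; have := K_sum (fun=> 1) y; under eq_bigr do rewrite mulr1; move=> ->; ring.
Qed.

Lemma wball_weak_duality p lam (h : X -> R) : wball p -> 0 <= lam ->
  (forall y l, F l - lam * `|pos l - pos y| <= h y) ->
  \sum_(l : X) p l * F l <= lam * delta + \sum_(y : X) mu y * h y.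
Proof.
move=> [_ p_wass] lam0 hF; apply/ler_addgt0Pr => e e0.
have lam1 : 0 < lam + 1 by rewrite ltr_wpDl.
have epsE : lam * (e / (lam + 1)) + e / (lam + 1) = e.
  by field; rewrite gt_eqF.
have : (wass pos p mu < (delta + e / (lam + 1))%:E)%E.
  by apply: le_lt_trans p_wass _; rewrite lte_fin ltrDl divr_gt0.
move=> /ereal_inf_lt[_ [G [G0 Gp Gmu] <-]]; rewrite lte_fin => Gcost.
have split_F l y : G l y * F l <= G l y * h y + lam * (G l y * `|pos l - pos y|).
  by rewrite mulrCA -mulrDr ler_wpM2l // -lerBlDr.
rewrite (eq_bigr (fun l => \sum_(y : X) G l y * F l)); last first.
  by move=> l _; rewrite -Gp mulr_suml.
apply: (le_trans (ler_sum _ (fun l _ => ler_sum _ (fun y _ => split_F l y)))).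
have sum_h : \sum_(l : X) \sum_(y : X) G l y * h y = \sum_(y : X) mu y * h y.
  by rewrite exchange_big; apply: eq_bigr => y _; rewrite -Gmu mulr_suml.
have sum_cost : \sum_(l : X) \sum_(y : X) lam * (G l y * `|pos l - pos y|) =
    lam * \sum_(l : X) \sum_(y : X) G l y * `|pos l - pos y|.
  by rewrite mulr_sumr; apply: eq_bigr => l _; rewrite mulr_sumr.
under eq_bigr do rewrite big_split /=.
rewrite big_split /= sum_h sum_cost.
have : lam * (\sum_(l : X) \sum_(y : X) G l y * `|pos l - pos y|) <=
       lam * (delta + e / (lam + 1)) by rewrite ler_wpM2l // ltW.
have eps0 : 0 < e / (lam + 1) by rewrite divr_gt0.
rewrite mulrDr; lra.
Qed.

Lemma wball_strong_duality :
  exists2 lam, 0 <= lam & exists2 p, wball p & forall s : X -> X,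
    lam * delta + \sum_(y : X) mu y * (F (s y) - lam * `|pos (s y) - pos y|)
    <= \sum_(l : X) p l * F l.
Proof.
have [|s [t [th [lam [th01 hcost lam0 hlam]]]]] :=
  @mixture_duality R {ffun X -> X} (fun s => transport_gain s)
    (fun s => transport_cost s) delta.
  exists [ffun y => y]; rewrite /transport_cost big1 // => y _.
  by rewrite ffunE subrr normr0 mulr0.
have [p pB pF] := wball_mixture th01 hcost.
exists lam => //; exists p => // u; rewrite pF.
have -> : \sum_(y : X) mu y * (F (u y) - lam * `|pos (u y) - pos y|) =
    transport_gain u - lam * transport_cost u.
  rewrite /transport_gain /transport_cost mulr_sumr -sumrB.
  by apply: eq_bigr => y _; ring.
have := hlam [ffun y => u y].
have -> : transport_gain [ffun y => u y] = transport_gain u.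
  by apply: eq_bigr => y _; rewrite ffunE.
have -> : transport_cost [ffun y => u y] = transport_cost u.
  by apply: eq_bigr => y _; rewrite ffunE.
lra.
Qed.

End WassersteinDuality.

Lemma ler_addexpr (R : realType) (g a b : R) : 0 <= g < 1 ->
  (forall n, a <= b + g ^+ n) -> a <= b.
Proof.
move=> /andP[g0 g1] hab; apply/ler_addgt0Pr => e e0.
have gn_small : \forall n \near \oo, `|g ^+ n| < e.
  by apply: cvgr0_norm_lt e0; apply: cvg_expr; rewrite ger0_norm.
near \oo => n.
apply: le_trans (hab n) _; rewrite lerD2l ltW // -[g ^+ n]ger0_norm ?exprn_ge0 //.
by near: n.
Unshelve. all: end_near.
Qed.

Lemma onem_exprn_le (R : realType) (g : R) k : 0 <= g <= 1 ->
  1 - g ^+ k <= k%:R * (1 - g).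
Proof.
move=> /andP[g0 g1]; elim: k => [|k IH]; first by rewrite expr0 subrr mul0r.
have gk1 : g ^+ k <= 1 by exact: exprn_ile1.
have : g ^+ k * (1 - g) <= 1 - g by rewrite ler_piMl ?subr_ge0.
rewrite exprS -natr1; nra.
Qed.

Lemma ler_exprn_scale (R : realType) (c b : R) k : 0 <= c ->
  (forall g, 0 < g < 1 -> g ^+ k * c <= b) -> c <= b.
Proof.
move=> c0 hb; apply/ler_addgt0Pr => e e0.
set M := c * k%:R; have M0 : 0 <= M by rewrite mulr_ge0.
set g := (M + 1) / (M + 1 + e).
have den0 : 0 < M + 1 + e by lra.
have onem_g : 1 - g = e / (M + 1 + e) by rewrite /g; field; rewrite gt_eqF.
have g01 : 0 < g < 1.
  apply/andP; split; first by apply: divr_gt0; lra.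
  by rewrite -subr_gt0 onem_g divr_gt0.
have gap : c * (1 - g ^+ k) <= M * (1 - g).
  rewrite /M -mulrA ler_wpM2l // onem_exprn_le //.
  by case/andP: g01 => /ltW -> /ltW ->.
have : M * (1 - g) <= e by rewrite onem_g mulrA ler_pdivrMr //; nra.
have := hb g g01; lra.
Qed.

Section RobustValueIteration.
Variables (R : realType) (X A : finType) (E U : {set X}) (pi : X -> A -> R)
  (B : X -> A -> set (X -> R)).
Local Notation H := (Hset E U).
Local Notation vfun := (X -> A -> R).
Hypotheses (pi_prob : forall x, is_prob (pi x))
  (B_prob : forall x a p, x \in H -> B x a p -> is_prob p)
  (B_nonempty : forall x a, x \in H -> exists p, B x a p).

Let one01 : 0 <= (1 : R) <= 1.
Proof. by rewrite ler01 lexx. Qed.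

Definition unit_value (Q : vfun) : Prop :=
  (forall y a, 0 <= Q y a <= 1) /\ (forall y a, y \notin H -> Q y a = 0).

Definition bellman (g : R) (p : X -> R) (Q : vfun) : R :=
  \sum_(y : X) p y * ((y \in U)%:R + g * \sum_(a' : A) pi y a' * Q y a').

Lemma notin_H_of_U y : y \in U -> y \notin H.
Proof. by move=> yU; rewrite !inE yU orbT. Qed.

Lemma unit_value0 : unit_value (fun _ _ => 0).
Proof. by split => // y a; rewrite lexx ler01. Qed.

Lemma mean_pi_ge0 (Q : vfun) y : (forall a, 0 <= Q y a) ->
  0 <= \sum_(a' : A) pi y a' * Q y a'.
Proof. by move=> Q0; apply: sumr_ge0 => a' _; rewrite mulr_ge0 ?(pi_prob y).1. Qed.

(* On [U] the continuation vanishes, since [U] is disjoint from [H]. *)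
Lemma bellman_summand_bounds g Q y : unit_value Q -> 0 <= g <= 1 ->
  0 <= (y \in U)%:R + g * \sum_(a' : A) pi y a' * Q y a' <= 1.
Proof.
move=> [Q01 Qoff] /andP[g0 g1].
have [pi0 pi1] := pi_prob y.
have mean_le1 : \sum_(a' : A) pi y a' * Q y a' <= 1.
  rewrite -pi1; apply: ler_sum => a' _.
  by rewrite ler_piMr //; case/andP: (Q01 y a').
have mean_ge0 : 0 <= \sum_(a' : A) pi y a' * Q y a'.
  by apply: mean_pi_ge0 => a; case/andP: (Q01 y a).
case: (boolP (y \in U)) => yU.
  rewrite big1 ?mulr0 ?addr0 ?lexx ?ler01 // => a' _.
  by rewrite Qoff ?mulr0 ?notin_H_of_U.
by rewrite add0r mulr_ge0 //= -[1]mulr1 ler_pM.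
Qed.

Lemma bellman_bounds g p Q : is_prob p -> unit_value Q -> 0 <= g <= 1 ->
  0 <= bellman g p Q <= 1.
Proof.
move=> [p0 p1] hQ hg; apply/andP; split.
  apply: sumr_ge0 => y _; rewrite mulr_ge0 //.
  by case/andP: (bellman_summand_bounds y hQ hg).
rewrite -p1; apply: ler_sum => y _; rewrite ler_piMr //.
by case/andP: (bellman_summand_bounds y hQ hg).
Qed.

Lemma bellman_ge0 g p Q : (forall y, 0 <= p y) -> 0 <= g ->
  (forall y a, 0 <= Q y a) -> 0 <= bellman g p Q.
Proof.
move=> p0 g0 Q0; apply: sumr_ge0 => y _.
by rewrite mulr_ge0 // addr_ge0 ?ler0n // mulr_ge0 // mean_pi_ge0.
Qed.

Lemma bellman_mono g p Q Q' : (forall y, 0 <= p y) -> 0 <= g ->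
  (forall y a, Q y a <= Q' y a) -> bellman g p Q <= bellman g p Q'.
Proof.
move=> p0 g0 QQ'; apply: ler_sum => y _; rewrite ler_wpM2l // lerD2l.
rewrite ler_wpM2l //; apply: ler_sum => a' _.
by rewrite ler_wpM2l ?(pi_prob y).1.
Qed.

Lemma bellman_shift g p Q r : is_prob p ->
  bellman g p (fun y a => Q y a + r) = bellman g p Q + g * r.
Proof.
move=> [_ p1]; have mean_shift y : \sum_(a' : A) pi y a' * (Q y a' + r) =
    \sum_(a' : A) pi y a' * Q y a' + r.
  under eq_bigr do rewrite mulrDr.
  by rewrite big_split /= -mulr_suml (pi_prob y).2 mul1r.
rewrite /bellman -[X in _ + X]mul1r -p1 mulr_suml -big_split /=.
by apply: eq_bigr => y _; rewrite mean_shift; ring.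
Qed.

Lemma bellman_scale g c p Q :
  bellman g p (fun y a => c * Q y a) = bellman (g * c) p Q.
Proof.
apply: eq_bigr => y _; rewrite -mulrA [c * _]mulr_sumr.
by congr (_ * (_ + (_ * _))); apply: eq_bigr => a' _; rewrite mulrCA.
Qed.

Lemma bellman_discount_le g p Q : (forall y, 0 <= p y) -> 0 <= g <= 1 ->
  (forall y a, 0 <= Q y a) -> bellman g p Q <= bellman 1 p Q.
Proof.
move=> p0 /andP[g0 g1] Q0; rewrite -[g]mul1r -bellman_scale.
by apply: bellman_mono => // y a; rewrite ler_piMl.
Qed.

Lemma bellman_scale_ge c p Q : (forall y, 0 <= p y) -> 0 <= c <= 1 ->
  (forall y a, 0 <= Q y a) -> c * bellman 1 p Q <= bellman c p Q.
Proof.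
move=> p0 /andP[c0 c1] Q0; rewrite mulr_sumr; apply: ler_sum => y _.
by rewrite mulrCA ler_wpM2l // mul1r mulrDr lerD2r ler_piMl ?ler0n.
Qed.

Definition rbellman (g : R) (Q : vfun) (x : X) (a : A) : R :=
  if x \in H then sup [set bellman g p Q | p in B x a] else 0.

Section RobustBellmanOperator.
Variables (g : R) (Q : vfun).
Hypotheses (g01 : 0 <= g <= 1) (hQ : unit_value Q).

Lemma rbellman_has_sup x a : x \in H -> has_sup [set bellman g p Q | p in B x a].
Proof.
move=> xH; have [p pB] := B_nonempty a xH; split; first by exists (bellman g p Q), p.
exists 1 => _ [q qB <-]; by case/andP: (bellman_bounds (B_prob xH qB) hQ g01).
Qed.

Lemma rbellman_ge x a p : x \in H -> B x a p -> bellman g p Q <= rbellman g Q x a.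
Proof.
move=> xH pB; rewrite /rbellman xH.
by apply: sup_upper_bound; [exact: rbellman_has_sup | exists p].
Qed.

Lemma rbellman_near x a eps : x \in H -> 0 < eps ->
  exists2 p, B x a p & rbellman g Q x a - eps < bellman g p Q.
Proof.
move=> xH eps0; have [_ [p pB <-]] := sup_adherent eps0 (rbellman_has_sup a xH).
by rewrite /rbellman xH; exists p.
Qed.

Lemma rbellman_unit : unit_value (rbellman g Q).
Proof.
split=> [y a|y a /negPf yH]; last by rewrite /rbellman yH.
case: (boolP (y \in H)) => yH; last by rewrite /rbellman (negPf yH) lexx ler01.
have [p pB] := B_nonempty a yH; apply/andP; split.
  apply: le_trans (rbellman_ge yH pB).
  by case/andP: (bellman_bounds (B_prob yH pB) hQ g01).
rewrite /rbellman yH; apply: ge_sup; first by exists (bellman g p Q), p.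
by move=> _ [q qB <-]; case/andP: (bellman_bounds (B_prob yH qB) hQ g01).
Qed.

End RobustBellmanOperator.

Lemma rbellman_le g Q x a r : x \in H ->
  (forall p, B x a p -> bellman g p Q <= r) -> rbellman g Q x a <= r.
Proof.
move=> xH hr; have [p0 p0B] := B_nonempty a xH; rewrite /rbellman xH; apply: ge_sup.
  by exists (bellman g p0 Q), p0.
by move=> _ [p pB <-]; exact: hr.
Qed.

Lemma rbellman_mono g Q Q' : 0 <= g <= 1 -> unit_value Q' ->
  (forall y a, Q y a <= Q' y a) -> forall x a, rbellman g Q x a <= rbellman g Q' x a.
Proof.
move=> g01 hQ' QQ' x a; case: (boolP (x \in H)) => xH; last by rewrite /rbellman (negPf xH).
apply: rbellman_le => // p pB.
have [p0 _] := B_prob xH pB.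
apply: le_trans (rbellman_ge g01 hQ' xH pB).
by apply: bellman_mono => //; case/andP: g01.
Qed.

Definition value_iter (g : R) (n : nat) : vfun := iter n (rbellman g) (fun _ _ => 0).

Lemma value_iter_unit g n : 0 <= g <= 1 -> unit_value (value_iter g n).
Proof.
by move=> g01; elim: n => [|n IH] /=; [exact: unit_value0 | exact: rbellman_unit].
Qed.

Lemma value_iter_le_succ g n : 0 <= g <= 1 ->
  forall y a, value_iter g n y a <= value_iter g n.+1 y a.
Proof.
move=> g01; elim: n => [|n IH] y a /=.
  by case/andP: ((rbellman_unit g01 unit_value0).1 y a).
by apply: rbellman_mono => //; exact: (value_iter_unit n.+1 g01).
Qed.

Lemma value_iter_mono g n m : 0 <= g <= 1 -> (n <= m)%N ->
  forall y a, value_iter g n y a <= value_iter g m y a.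
Proof.
move=> g01 /subnK <- y a; elim: (m - n)%N => [|k IH] //=.
exact: le_trans IH (value_iter_le_succ _ g01 y a).
Qed.

Lemma value_iter_discount g k : 0 < g <= 1 ->
  forall x a, g ^+ k * value_iter 1 k x a <= value_iter g k x a.
Proof.
move=> /andP[g0 g1]; have g01 : 0 <= g <= 1 by rewrite ltW.
have gk01 n : 0 <= g ^+ n <= 1 by rewrite exprn_ge0 ?exprn_ile1 // ltW.
elim: k => [|k IH] x a; first by rewrite /= mulr0.
have [v01 voff] := value_iter_unit k one01.
have scaled_unit : unit_value (fun y b => g ^+ k * value_iter 1 k y b).
  split=> [y b|y b yH]; last by rewrite voff ?mulr0.
  have /andP[v0 v1] := v01 y b; have /andP[gk0 gk1] := gk01 k.
  by rewrite mulr_ge0 //= mulr_ile1.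
apply: le_trans (rbellman_mono g01 (value_iter_unit k g01) IH x a).
rewrite /=; case: (boolP (x \in H)) => xH; last by rewrite /rbellman (negPf xH) mulr0.
have gk_pos : 0 < g ^+ k.+1 by rewrite exprn_gt0.
rewrite mulrC -ler_pdivlMr //; apply: rbellman_le => // p pB.
have [p0 _] := B_prob xH pB.
rewrite ler_pdivlMr // mulrC.
apply: le_trans (rbellman_ge g01 scaled_unit xH pB).
rewrite bellman_scale -exprS; apply: bellman_scale_ge => // y b.
by case/andP: (v01 y b).
Qed.

Definition admissible (Pt : X -> A -> X -> R) : Prop :=
  forall x a, x \in H -> B x a (Pt x a).

Definition robust_value (x : X) (a : A) : \bar R :=
  ereal_sup ((fun Pt => Qpol E U pi Pt x a) @` [set Pt | admissible Pt]).

Definition kbellman (g : R) (Pt : X -> A -> X -> R) (Q : vfun) (x : X) (a : A) : R :=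
  if x \in H then bellman g (Pt x a) Q else 0.

Lemma Qfin_succ Pt n x a :
  Qfin E U pi Pt n.+1 x a = kbellman 1 Pt (Qfin E U pi Pt n) x a.
Proof. by rewrite /= /kbellman; case: ifP => // _; apply: eq_bigr => y _; rewrite mul1r. Qed.

Lemma Qfin_le_value_iter Pt n : admissible Pt ->
  forall x a, Qfin E U pi Pt n x a <= value_iter 1 n x a.
Proof.
move=> hPt; elim: n => [|n IH] x a; first by rewrite lexx.
rewrite Qfin_succ /= /kbellman; case: ifP => xH; last by rewrite /rbellman xH lexx.
apply: le_trans (rbellman_ge one01 (value_iter_unit n one01) xH (hPt x a xH)).
by apply: bellman_mono => //; have [] := B_prob xH (hPt x a xH).
Qed.

Definition shift_bounded (T : vfun -> vfun) (g : R) : Prop :=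
  forall Q Q' r, 0 <= r -> (forall y a, Q y a <= Q' y a + r) ->
  forall y a, T Q y a <= T Q' y a + g * r.

Lemma shift_bounded_iter T g n : 0 <= g -> shift_bounded T g ->
  shift_bounded (iter n T) (g ^+ n).
Proof.
move=> g0 hT; elim: n => [|n IH] Q Q' r r0 QQ' y a /=; first by rewrite mul1r.
rewrite exprS -mulrA; apply: hT; first by rewrite mulr_ge0 ?exprn_ge0.
exact: IH.
Qed.

(* Errors [eta * (1 - g)] per step sum to at most [eta] under a
   [g]-contraction. *)
Lemma shift_bounded_iter_lower T g eta (w : vfun) :
  0 <= g -> 0 <= eta -> shift_bounded T g ->
  (forall y a, w y a - eta * (1 - g) <= T w y a) ->
  forall n y a, w y a - eta <= iter n T w y a.
Proof.
move=> g0 eta0 hT hw; elim=> [|n IH] y a /=; first by rewrite lerBlDr lerDl.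
have IH' y' a' : w y' a' <= iter n T w y' a' + eta by rewrite -lerBlDr.
have := hT _ _ _ eta0 IH' y a; have := hw y a; lra.
Qed.

Lemma kbellman_shift_bounded g Pt : admissible Pt -> 0 <= g ->
  shift_bounded (kbellman g Pt) g.
Proof.
move=> hPt g0 Q Q' r r0 QQ' x a; rewrite /kbellman.
case: ifP => xH; last by rewrite add0r mulr_ge0.
have Pt_prob := B_prob xH (hPt x a xH).
by rewrite -bellman_shift //; apply: bellman_mono => //; case: Pt_prob.
Qed.

Lemma kbellman_iter_le_Qfin g Pt n : admissible Pt -> 0 <= g <= 1 ->
  forall x a, 0 <= iter n (kbellman g Pt) (fun _ _ => 0) x a <= Qfin E U pi Pt n x a.
Proof.
move=> hPt g01; elim: n => [|n IH] x a; first by rewrite /= lexx.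
rewrite Qfin_succ /= /kbellman; case: ifP => xH; last by rewrite lexx.
have [p0 _] := B_prob xH (hPt x a xH).
have iter_ge0 y b : 0 <= iter n (kbellman g Pt) (fun _ _ => 0) y b.
  by case/andP: (IH y b).
rewrite bellman_ge0 //=; last by case/andP: g01.
apply: le_trans (bellman_discount_le _ g01 iter_ge0) _ => //.
by apply: bellman_mono => // y b; case/andP: (IH y b).
Qed.

Lemma admissible_choice (Pr : X -> A -> (X -> R) -> Prop) :
  (forall x a, x \in H -> exists2 p, B x a p & Pr x a p) ->
  exists2 Pt, admissible Pt & forall x a, x \in H -> Pr x a (Pt x a).
Proof.
move=> hB.
have hc (xa : X * A) : exists p, xa.1 \in H -> B xa.1 xa.2 p /\ Pr xa.1 xa.2 p.
  case: (boolP (xa.1 \in H)) => xH; last by exists (fun=> 0).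
  by have [p pB pPr] := hB _ xa.2 xH; exists p.
have [f hf] := choice hc.
by exists (fun x a => f (x, a)) => x a xH; case: (hf (x, a) xH).
Qed.

Lemma admissible_exists : exists Pt, admissible Pt.
Proof.
have [x a xH|Pt hPt _] := @admissible_choice (fun _ _ _ => True).
  by have [p pB] := B_nonempty a xH; exists p.
by exists Pt.
Qed.

Lemma robust_value_le x a r :
  (forall Pt, admissible Pt -> forall n, Qfin E U pi Pt n x a <= r) ->
  (robust_value x a <= r%:E)%E.
Proof.
move=> hr; apply: ge_ereal_sup => _ [Pt hPt <-].
by apply: ge_ereal_sup => _ [n _ <-]; rewrite lee_fin; exact: hr.
Qed.

Lemma Qfin_le_robust_value Pt n x a : admissible Pt ->
  ((Qfin E U pi Pt n x a)%:E <= robust_value x a)%E.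
Proof.
move=> hPt; apply: le_trans (_ : Qpol E U pi Pt x a <= _)%E.
  by apply: ereal_sup_ubound; exists n.
by apply: ereal_sup_ubound; exists Pt.
Qed.

Definition rvalue (x : X) (a : A) : R := fine (robust_value x a).

Lemma robust_valueE x a : robust_value x a = (rvalue x a)%:E.
Proof.
have [Pt hPt] := admissible_exists.
rewrite fineK // ge0_fin_numE; first last.
  exact: (Qfin_le_robust_value 0 x a hPt).
apply: le_lt_trans (ltry 1); apply: robust_value_le => Pt' hPt' n.
apply: le_trans (Qfin_le_value_iter n hPt' x a) _.
by case/andP: ((value_iter_unit n one01).1 x a).
Qed.

Lemma rvalue_le x a r :
  (forall Pt, admissible Pt -> forall n, Qfin E U pi Pt n x a <= r) -> rvalue x a <= r.
Proof. by move=> hr; rewrite -lee_fin -robust_valueE robust_value_le. Qed.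

Lemma Qfin_le_rvalue Pt n x a : admissible Pt -> Qfin E U pi Pt n x a <= rvalue x a.
Proof. by move=> hPt; rewrite -lee_fin -robust_valueE Qfin_le_robust_value. Qed.

Lemma rvalue_ge0 x a : 0 <= rvalue x a.
Proof.
have [Pt hPt] := admissible_exists.
exact: (Qfin_le_rvalue 0 x a hPt).
Qed.

Lemma near_optimal_kernel g Q eps : 0 <= g <= 1 -> unit_value Q -> 0 < eps ->
  exists2 Pt, admissible Pt & forall x a, rbellman g Q x a - eps <= kbellman g Pt Q x a.
Proof.
move=> g01 hQ eps0.
have [Pt hPt Pt_near] := admissible_choice
  (Pr := fun x a p => rbellman g Q x a - eps < bellman g p Q)
  (fun x a xH => rbellman_near g01 hQ a xH eps0).
exists Pt => // x a; rewrite /kbellman; case: ifP => xH; first exact/ltW/Pt_near.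
by rewrite /rbellman xH sub0r oppr_le0 ltW.
Qed.

(* A stationary kernel that is [eta (1 - g)]-optimal for one step of
   discounted value iteration loses at most [eta] in the long run. *)
Lemma discounted_value_le_rvalue g N : 0 < g < 1 ->
  forall x a, value_iter g N x a <= rvalue x a.
Proof.
move=> /andP[g0 g1] x a; have g01 : 0 <= g <= 1 by rewrite !ltW.
set w := value_iter g N; have [w01 _] : unit_value w := value_iter_unit N g01.
apply/ler_addgt0Pr => eta eta0.
have [|Pt hPt Pt_near] := near_optimal_kernel g01 (value_iter_unit N g01)
  (_ : 0 < eta * (1 - g)); first by rewrite mulr_gt0 // subr_gt0.
have T_shift := kbellman_shift_bounded hPt (ltW g0).
have w_step y b : w y b - eta * (1 - g) <= kbellman g Pt w y b.
  by apply: le_trans (Pt_near y b); rewrite lerD2r value_iter_le_succ.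
rewrite -lerBlDr; apply: (@ler_addexpr _ g); first by rewrite ltW.
move=> n; have lower := shift_bounded_iter_lower (ltW g0) (ltW eta0) T_shift w_step n x a.
have w_le1 y b : w y b <= (fun _ _ => 0) y b + 1.
  by rewrite add0r; case/andP: (w01 y b).
have upper := shift_bounded_iter n (ltW g0) T_shift ler01 w_le1 x a.
have /andP[_ to_Qfin] := kbellman_iter_le_Qfin n hPt g01 x a.
have := Qfin_le_rvalue n x a hPt.
rewrite mulr1 in upper; lra.
Qed.

Lemma value_iter_le_rvalue k x a : value_iter 1 k x a <= rvalue x a.
Proof.
apply: (@ler_exprn_scale _ _ _ k); first by case/andP: ((value_iter_unit k one01).1 x a).
move=> g /andP[g0 g1]; apply: le_trans (value_iter_discount k _ x a) _.
  by rewrite g0 ltW.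
by apply: discounted_value_le_rvalue; rewrite g0.
Qed.

Lemma rvalue_approx e : 0 < e ->
  exists K, forall y b, rvalue y b <= value_iter 1 K y b + e.
Proof.
move=> e0.
have hK (yb : X * A) : exists K, rvalue yb.1 yb.2 <= value_iter 1 K yb.1 yb.2 + e.
  case: yb => y b /=.
  have : ((rvalue y b - e)%:E < robust_value y b)%E.
    by rewrite robust_valueE lte_fin ltrBlDr ltrDl.
  move=> /ereal_sup_gt[_ [Pt hPt <-]] /ereal_sup_gt[_ [n _ <-]]; rewrite lte_fin.
  by exists n; have := Qfin_le_value_iter n hPt y b; lra.
have [K hKf] := choice hK.
exists (\max_(yb : X * A) K yb)%N => y b.
apply: le_trans (hKf (y, b)) _; rewrite lerD2r.
exact: (value_iter_mono one01 (leq_bigmax (y, b)) y b).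
Qed.

Lemma rvalue_bellman_ge x a p : x \in H -> B x a p -> bellman 1 p rvalue <= rvalue x a.
Proof.
move=> xH pB; have p_prob := B_prob xH pB; apply/ler_addgt0Pr => e e0.
have [K hK] := rvalue_approx e0.
apply: le_trans (_ : bellman 1 p (fun y b => value_iter 1 K y b + e) <= _).
  by apply: bellman_mono => //; case: p_prob.
rewrite bellman_shift // mul1r lerD2r.
apply: le_trans (rbellman_ge one01 (value_iter_unit K one01) xH pB) _.
exact: (value_iter_le_rvalue K.+1).
Qed.

Lemma rvalue_bellman_le x a r : x \in H ->
  (forall p, B x a p -> bellman 1 p rvalue <= r) -> rvalue x a <= r.
Proof.
move=> xH hr; apply: rvalue_le => Pt hPt n.
have pB := hPt x a xH; have [p0 _] := B_prob xH pB.
apply: le_trans (hr _ pB); case: n => [|n].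
  by apply: bellman_ge0 => // y b; exact: rvalue_ge0.
rewrite Qfin_succ /kbellman xH; apply: bellman_mono => // y b.
exact: Qfin_le_rvalue.
Qed.

End RobustValueIteration.

Lemma bigmaxe_EFin (R : realType) (T : finType) (F : T -> R) i :
  (forall j, F j <= F i) -> (\big[maxe/-oo]_(j : T) (F j)%:E = (F i)%:E)%E.
Proof.
move=> Fi; apply/eqP; rewrite eq_le le_bigmax andbT.
by apply: bigmax_le => [|j _]; rewrite ?leNye ?lee_fin.
Qed.

Section RobustQDuality.
Variables (R : realType) (X A : finType) (pos : X -> R) (E U : {set X})
  (P : X -> A -> X -> R) (pi : X -> A -> R) (delta : R).
Local Notation H := (Hset E U).
Hypotheses (P_prob : forall x a, x \in H -> is_prob (P x a))
  (pi_prob : forall x, is_prob (pi x)) (delta_ge0 : 0 <= delta).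

Local Notation B := (fun x a => wball pos (P x a) delta).

Let B_prob x a p : x \in H -> B x a p -> is_prob p.
Proof. by move=> _ []. Qed.

Let B_nonempty x a : x \in H -> exists p, B x a p.
Proof. by move=> xH; exists (P x a); exact: wball_center (P_prob a xH) delta_ge0. Qed.

Local Notation V := (rvalue E U pi B).

(* [ambiguity] unfolds to [admissible] for these balls. *)
Lemma robustQE x a : robustQ pos E U P pi delta x a = (V x a)%:E.
Proof. exact: robust_valueE. Qed.

Definition next_value (l : X) : R := (l \in U)%:R + \sum_(a' : A) V l a' * pi l a'.

Lemma bellman_next_value p : bellman U pi 1 p V = \sum_(l : X) p l * next_value l.
Proof.
apply: eq_bigr => l _; rewrite mul1r; congr (_ * (_ + _)).
by apply: eq_bigr => a' _; rewrite mulrC.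
Qed.

Definition dual_selector (lam : R) (y : X) : X :=
  [arg max_(l > y) (next_value l - lam * `|pos l - pos y|)]%O.

Lemma dual_selectorP lam y l :
  next_value l - lam * `|pos l - pos y| <=
  next_value (dual_selector lam y) - lam * `|pos (dual_selector lam y) - pos y|.
Proof. by rewrite /dual_selector; case: arg_maxP => // i _; apply. Qed.

Lemma dual_objE x a lam : dual_obj pos E U P pi delta x a lam =
  (lam * delta + \sum_(y : X) P x a y *
     (next_value (dual_selector lam y) - lam * `|pos (dual_selector lam y) - pos y|))%:E.
Proof.
rewrite /dual_obj EFinD -sumEFin; congr (_ + _)%E; apply: eq_bigr => y _.
rewrite mulrC EFinM; congr (_ * _)%E.
rewrite -(bigmaxe_EFin (dual_selectorP lam y)); apply: eq_bigr => l _.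
under eq_bigr do rewrite robustQE -EFinM.
by rewrite sumEFin -!EFinD /next_value; congr (_%:E); ring.
Qed.

Lemma robustQ_weak_duality x a lam : x \in H -> 0 <= lam ->
  (robustQ pos E U P pi delta x a <= dual_obj pos E U P pi delta x a lam)%E.
Proof.
move=> xH lam0; rewrite robustQE dual_objE lee_fin.
apply: rvalue_bellman_le => // p pB; rewrite bellman_next_value.
by apply: wball_weak_duality pB lam0 _ => y l; exact: dual_selectorP.
Qed.

Lemma robustQ_strong_duality x a : x \in H -> exists2 lam, 0 <= lam &
  (dual_obj pos E U P pi delta x a lam <= robustQ pos E U P pi delta x a)%E.
Proof.
move=> xH; have [lam lam0 [p pB hp]] :=
  wball_strong_duality pos (P_prob a xH) delta_ge0 next_value.
exists lam => //; rewrite robustQE dual_objE lee_fin.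
apply: le_trans (hp _) _; rewrite -bellman_next_value.
exact: rvalue_bellman_ge.
Qed.

End RobustQDuality.

Theorem mainTheorem4 (R : realType) (X A : finType) (pos : X -> R)
  (E U : {set X}) (P : X -> A -> X -> R) (pi : X -> A -> R) (delta : R)
  (pos_inj : injective pos)
  (EU_disj : disjointEU E U)
  (P_prob : forall x a, x \in Hset E U -> is_prob (P x a))
  (pi_prob : forall x, is_prob (pi x))
  (delta_ge0 : 0 <= delta)
  (x : X) (a : A) (xH : x \in Hset E U) :
  robustQ pos E U P pi delta x a =
  ereal_inf [set dual_obj pos E U P pi delta x a lam | lam in [set l : R | 0 <= l]].
Proof.
apply/eqP; rewrite eq_le; apply/andP; split.
  by apply: le_ereal_inf_tmp => _ [lam lam0 <-]; exact: robustQ_weak_duality.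
have [lam lam0 dual_le] := robustQ_strong_duality pos P_prob pi_prob delta_ge0 a xH.
by apply: le_trans dual_le; apply: ereal_inf_lbound; exists lam.
Qed.
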